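(* Assume one of the following: (i) $\mathfrak{D}'=\mathfrak{D}$ and $R_1,R_2\in\mathfrak{D}$; (ii) $\mathfrak{T}_a\subseteq\mathfrak{D}'\subseteq\mathfrak{D}$ and $R_1,R_2\in\mathfrak{T}_a$; (iii) $\mathfrak{D}'\in\{\mathfrak{P},\mathfrak{P}^*\}$ and $R_1,R_2\in\mathfrak{D}'$. Then for all $S_1,S_2\in\mathfrak{D}$: if $R_1\sqsubseteq_\Gamma S_1$ and $R_2\sqsubseteq_\Gamma S_2$ with respect to $\mathfrak{D}'$, then $R_1+R_2\sqsubseteq_\Gamma S_1+S_2$ with respect to $\mathfrak{D}'$. Here $+$ denotes the direct (disjoint) sum of digraphs.
   Context: **Digraphs and homomorphisms.** - A digraph $G$ is a pair $(V(G),A(G))$, where $V(G)$ is a finite non-empty set and $A(G)\subseteq V(G)\times V(G)$. Arcs are written $vw$. - $G^*$ is $G$ with all loops $vv$ removed. - A homomorphism $\xi:G\to H$ is a map $V(G)\to V(H)$ with $\xi(v)\xi(w)\in A(H)$ for all $vw\in A(G)$. $\mathcal{H}(G,H)$ is the set of homomorphisms. - A walk is a sequence $v_0,\dots,v_I$ with $I\ge1$ and $v_{i-1}v_i\in A(G)$ for all $i$. It is closed if $v_0=v_I$. **Classes of digraphs.** - $\mathfrak{D}$ is the class of all digraphs. - $\mathfrak{P}$ is the class of finite posets. - $\mathfrak{P}^*=\{P^*:P\in\mathfrak{P}\}$. - $\mathfrak{T}_a=\{G\in\mathfrak{D}: G^*\text{ contains no closed walk}\}$. **Connectivity.** - Two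 vertices $u,w$ are adjacent if $uw\in A(G)$ or $wu\in A(G)$. - For $X\subseteq V(G)$ and $v,w\in X$, the vertices $v$ and $w$ are connected in $X$ if $v=w$, or if there are $z_0=v,\dots,z_I=w$ in $X$ with consecutive terms adjacent. - $\gamma_X(v)$ is the set of $w\in X$ connected to $v$ in $X$. - $\Gamma_\xi(v):=\gamma_{\xi^{-1}(\xi(v))}(v)$. **Schemes.** - $\mathfrak{D}'_r$ is a fixed system of representatives of $\mathfrak{D}'$ up to isomorphism. - A Hom-scheme from $R$ to $S$ with respect to $\mathfrak{D}'$ is a family of maps $\rho_G:\mathcal{H}(G,R)\to\mathcal{H}(G,S)$, $G\in\mathfrak{D}'_r$. - It is strong if all $\rho_G$ are injective. - It is a $\Gamma$-scheme if $\Gamma_{\rho_G(\xi)}(v)=\Gamma_\xi(v)$ for all $G$, $\xi$ and $v$. - $R\sqsubseteq_\Gamma S$ with respect to $\mathfrak{D}'$ means that a strong $\Gamma$-scheme exists. *)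

From mathcomp Require Import all_boot.
Set Implicit Arguments. Unset Strict Implicit. Unset Printing Implicit Defensive.

Record digraph := Digraph {
  dV :> finType;
  dA : rel dV;
  dV_nonempty : 0 < #|dV| }.

Definition is_hom (G H : digraph) (f : {ffun dV G -> dV H}) : bool :=
  [forall v, forall w, dA v w ==> dA (f v) (f w)].

Definition hom (G H : digraph) := {f : {ffun dV G -> dV H} | is_hom f}.

Definition hom_fun (G H : digraph) (xi : hom G H) : dV G -> dV H := val xi.

Definition fibre_adj (G H : digraph) (xi : hom G H) (v : dV G) : rel (dV G) :=
  fun x y => [&& hom_fun xi x == hom_fun xi v, hom_fun xi y == hom_fun xi v
              & dA x y || dA y x].

(* Gamma_xi(v) = gamma_{xi^{-1}(xi(v))}(v) *)
Definition Gamma (G H : digraph) (xi : hom G H) (v : dV G) : {set dV G} :=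
  [set w | connect (fibre_adj xi v) v w].

Definition classD : digraph -> Prop := fun _ => True.

Definition is_poset (G : digraph) : Prop :=
  reflexive (@dA G) /\ antisymmetric (@dA G) /\ transitive (@dA G).

Definition classP : digraph -> Prop := is_poset.

Definition loopless (G : digraph) : digraph :=
  @Digraph (dV G) (fun x y => (x != y) && dA x y) (dV_nonempty G).

Definition isomorphic (G H : digraph) : Prop :=
  exists f : dV G -> dV H, bijective f /\ forall x y, dA (f x) (f y) = dA x y.

Definition classPstar : digraph -> Prop :=
  fun G => exists P : digraph, is_poset P /\ isomorphic G (loopless P).

(* closed walk v_0,...,v_I (I >= 1) in G: v_0 :: p with p non-empty *)
Definition has_closed_walk (G : digraph) : Prop :=
  exists (v0 : dV G) (p : seq (dV G)),
    p != [::] /\ path (@dA G) v0 p /\ last v0 p = v0.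

Definition classTa : digraph -> Prop :=
  fun G => ~ has_closed_walk (loopless G).

Definition sum_arc (G H : digraph) : rel (dV G + dV H)%type :=
  fun x y => match x, y with
             | inl a, inl b => dA a b
             | inr a, inr b => dA a b
             | _, _ => false
             end.

Lemma sum_nonempty (G H : digraph) : 0 < #|{: (dV G + dV H)%type}|.
Proof. by rewrite card_sum addn_gt0 dV_nonempty. Qed.

Definition dsum (G H : digraph) : digraph :=
  @Digraph (dV G + dV H)%type (@sum_arc G H) (sum_nonempty G H).

(* R ⊑_Γ S w.r.t. D': a strong Γ-scheme exists.  The family is indexed by all
   members of D'. *)
Definition Gamma_le (D' : digraph -> Prop) (R S : digraph) : Prop :=
  exists rho : forall G : digraph, D' G -> hom G R -> hom G S,
    forall (G : digraph) (hG : D' G),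
      injective (rho G hG) /\
      forall (xi : hom G R) (v : dV G), Gamma (rho G hG xi) v = Gamma xi v.

From mathcomp Require Import all_boot.
From Stdlib Require Import ProofIrrelevance.
Set Implicit Arguments. Unset Strict Implicit. Unset Printing Implicit Defensive.

(* Let rho1, rho2 be strong Gamma-schemes from R1 to S1 and from R2 to S2, and
   let xi : G -> R1 + R2.  To use rho1 we need a digraph of D' mapping to R1: we cut
   the R1-part of G into blocks, each inside one Gamma_xi-class, and pass to
   the quotient G/Q, on which xi induces xi1 : G/Q -> R1.  The scheme for the
   sum sends xi to  v |-> rho1(xi1)(block of v)  on the R1-part, and likewise
   on the R2-part.  Gamma-classes and injectivity survive this construction
   because the partial inverse of a sum injection is injective on its domain.
   The blocks must be chosen so that G/Q lies in D' again: the Gamma_xi-classes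
   work for D and T_a (G/Q then maps to R_i without collapsing any arc), and
   singletons work for posets and loopless posets (G/Q is an induced subgraph). *)

Lemma connect_ind (T : finType) (e : rel T) (P : T -> Prop) x :
  P x -> (forall a b, connect e x a -> e a b -> P a -> P b) ->
  forall y, connect e x y -> P y.
Proof.
move=> Px step y /connectP [s + ->].
have: connect e x x /\ P x by split; first exact: connect0.
elim: s {-1}x => [|a s IH] z [xz Pz] //= /andP [ez pth].
by apply: IH pth; split; [apply: connect_trans xz (connect1 ez) | apply: step ez Pz].
Qed.

Lemma connect_map (T U : finType) (e : rel T) (e' : rel U) (h : T -> U) x :
  (forall a b, connect e x a -> e a b -> e' (h a) (h b)) ->
  forall y, connect e x y -> connect e' (h x) (h y).
Proof.
move=> step; apply: connect_ind => [|a b xa ab xha]; first exact: connect0.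
exact: connect_trans xha (connect1 (step _ _ xa ab)).
Qed.

Definition adj (G : digraph) : rel (dV G) := fun x y => dA x y || dA y x.

Definition fibre_rel (G : digraph) (X : eqType) (f : dV G -> X) (v : dV G) :
  rel (dV G) := fun x y => [&& f x == f v, f y == f v & adj x y].

Definition component (G : digraph) (X : eqType) (f : dV G -> X) (v : dV G) :
  {set dV G} := [set w | connect (fibre_rel f v) v w].

Lemma GammaE (G H : digraph) (xi : hom G H) v :
  Gamma xi v = component (hom_fun xi) v.
Proof. by []. Qed.

Section Components.
Variables (G : digraph) (X : eqType) (f : dV G -> X).

Lemma component_self v : v \in component f v.
Proof. by rewrite inE connect0. Qed.

Lemma component_fibre v w : w \in component f v -> f w = f v.
Proof.
rewrite inE; apply: (connect_ind (P := fun w => f w = f v)) => //.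
by move=> a b _ /and3P [_ /eqP].
Qed.

Lemma component_step v a b :
  a \in component f v -> fibre_rel f v a b -> b \in component f v.
Proof. by rewrite !inE => va ab; apply: connect_trans va (connect1 ab). Qed.

Lemma component_trans v w : w \in component f v -> component f w = component f v.
Proof.
move=> vw; have fw := component_fibre vw; move: vw; rewrite inE => vw.
have eq_rel : fibre_rel f w =2 fibre_rel f v by move=> x y; rewrite /fibre_rel fw.
have sym : connect_sym (fibre_rel f v).
  by apply: sym_connect_sym => x y; rewrite /fibre_rel /adj orbC andbCA.
apply/setP => x; rewrite !inE (eq_connect eq_rel).
apply/idP/idP => [|vx]; first exact: connect_trans vw.
by rewrite sym in vw; apply: connect_trans vw vx.
Qed.

Lemma component_map (H : digraph) (Y : eqType) (g : dV H -> Y) (h : dV G -> dV H) v :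
  (forall a, a \in component f v -> g (h a) = g (h v)) ->
  (forall a b, a \in component f v -> fibre_rel f v a b -> adj (h a) (h b)) ->
  forall x, x \in component f v -> h x \in component g (h v).
Proof.
move=> gh hadj x; rewrite !inE; apply: connect_map => a b va ab.
have va' : a \in component f v by rewrite inE.
have vb := component_step va' ab.
by rewrite /fibre_rel (gh _ va') (gh _ vb) eqxx (hadj _ _ va' ab).
Qed.

End Components.

Lemma component_eq (G : digraph) (X Y : eqType) (f : dV G -> X) (g : dV G -> Y) v :
  (forall a, a \in component f v -> g a = g v) ->
  (forall a, a \in component g v -> f a = f v) ->
  component f v = component g v.
Proof.
move=> gf fg; apply/eqP; rewrite eqEsubset; apply/andP; split; apply/subsetP.
- by move=> x; apply: (component_map (h := id) gf) => a b _ /and3P [].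
- by move=> x; apply: (component_map (h := id) fg) => a b _ /and3P [].
Qed.

(* As digraphs are non-empty, forming it
   requires a proof that Q is non-empty. *)
Definition some_vertex (G : digraph) : dV G := enum_val (Ordinal (dV_nonempty G)).

Section Quotient.
Variables (G : digraph) (Q : {set {set dV G}}).

Definition block := {B : {set dV G} | B \in Q}.

Definition block_arc : rel block :=
  fun B C => [exists x in val B, exists y in val C, dA x y].

Lemma block_arcI (B C : block) x y :
  x \in val B -> y \in val C -> dA x y -> block_arc B C.
Proof.
by move=> xB yC xy; apply/exists_inP; exists x => //; apply/exists_inP; exists y.
Qed.

Lemma block_arcP (B C : block) :
  block_arc B C -> exists x y, [/\ x \in val B, y \in val C & dA x y].
Proof. by case/exists_inP => x xB /exists_inP [y yC xy]; exists x, y. Qed.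

Lemma mem_cover (B : block) x : x \in val B -> x \in cover Q.
Proof. by move=> xB; apply/bigcupP; exists (val B) => //; apply: valP. Qed.

Lemma cover_blocks x : x \in cover Q -> 0 < #|{: block}|.
Proof. by move=> xQ; apply/card_gt0P; exists (exist (fun B => B \in Q) _ (pblock_mem xQ)). Qed.

Variable ne : 0 < #|{: block}|.

Definition quotient : digraph := @Digraph block block_arc ne.

(* The block containing x (an arbitrary block when x is not covered). *)
Definition proj (x : dV G) : dV quotient := insubd (some_vertex quotient) (pblock Q x).

Lemma proj_mem x : x \in cover Q -> x \in val (proj x).
Proof. by move=> xQ; rewrite /proj insubdK ?mem_pblock // pblock_mem. Qed.

Lemma proj_block (B : block) x : trivIset Q -> x \in val B -> proj x = B.
Proof.
move=> tQ xB; apply: val_inj.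
by rewrite /proj insubdK ?(def_pblock tQ (valP B) xB) //; apply: valP.
Qed.

Lemma proj_adj x y :
  x \in cover Q -> y \in cover Q -> adj x y -> adj (proj x) (proj y).
Proof.
move=> xQ yQ /orP [] xy; apply/orP; [left | right];
  by apply: block_arcI xy; apply: proj_mem.
Qed.

End Quotient.

Definition strong_Gamma_scheme (D' : digraph -> Prop) (R S : digraph)
  (rho : forall H, D' H -> hom H R -> hom H S) : Prop :=
  forall H (hH : D' H), injective (rho H hH) /\
    forall (xi : hom H R) v, Gamma (rho H hH xi) v = Gamma xi v.

(* A partial embedding p : T -/-> R is injective on its domain and maps arcs
   between points of its domain to arcs; the partial inverses of the two
   injections of a direct sum are the examples we need. *)
Definition partial_embedding (T R : digraph) (p : dV T -> option (dV R)) : Prop :=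
  (forall a b r, p a = Some r -> p b = Some r -> a = b) /\
  (forall a b r s, p a = Some r -> p b = Some s -> dA a b -> dA r s).

Definition admissible (G T R : digraph) (p : dV T -> option (dV R)) (xi : hom G T)
    (Q : {set {set dV G}}) : Prop :=
  [/\ trivIset Q, set0 \notin Q,
      forall x, (x \in cover Q) = (p (hom_fun xi x) != None) &
      forall B x, B \in Q -> x \in B -> B \subset Gamma xi x].

Lemma hom_arc (G H : digraph) (xi : hom G H) x y :
  dA x y -> dA (hom_fun xi x) (hom_fun xi y).
Proof. by move: (valP xi) => /forallP/(_ x)/forallP/(_ y)/implyP. Qed.

(* Given an admissible Q, xi induces a homomorphism from G/Q to R;
   composing a scheme rho for R with it and with the projection G -> G/Q
   yields a map [lift] on the covered vertices that reproduces the
   Gamma-classes of xi and from which xi can be recovered. *)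
Section Transfer.
Variables (G T R : digraph) (p : dV T -> option (dV R)) (xi : hom G T).
Variable Q : {set {set dV G}}.
Hypotheses (p_emb : partial_embedding p) (Q_adm : admissible p xi Q).

Definition quotient_map (B : block Q) : dV R :=
  if [pick x in val B] is Some x then odflt (some_vertex R) (p (hom_fun xi x))
  else some_vertex R.

Lemma quotient_mapE (B : block Q) x :
  x \in val B -> p (hom_fun xi x) = Some (quotient_map B).
Proof.
have [_ _ Q_cov Q_Gam] := Q_adm.
move=> xB; rewrite /quotient_map; case: pickP => [z zB | /(_ x)]; last by rewrite xB.
have -> : hom_fun xi z = hom_fun xi x.
  by apply: component_fibre; apply: (subsetP (Q_Gam _ _ (valP B) xB)).
by move: (mem_cover xB); rewrite Q_cov; case: (p _).
Qed.

Lemma quotient_map_is_hom ne :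
  @is_hom (quotient ne) R [ffun B => quotient_map B].
Proof.
apply/forallP => B; apply/forallP => C; apply/implyP => /block_arcP [x [y [xB yC xy]]].
by rewrite !ffunE; apply: p_emb.2 (hom_arc xi xy); apply: quotient_mapE.
Qed.

Definition quotient_hom ne : hom (quotient ne) R :=
  exist (@is_hom (quotient ne) R) _ (quotient_map_is_hom ne).

Lemma quotient_homE ne (B : dV (quotient ne)) x :
  x \in val B -> p (hom_fun xi x) = Some (hom_fun (quotient_hom ne) B).
Proof. by rewrite /hom_fun /= ffunE; apply: quotient_mapE. Qed.

Lemma quotient_hom_proj ne x :
  x \in cover Q -> p (hom_fun xi x) = Some (hom_fun (quotient_hom ne) (proj ne x)).
Proof. by move=> xQ; apply/quotient_homE/proj_mem. Qed.

Lemma Gamma_proj ne v x :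
  v \in cover Q -> x \in Gamma xi v -> proj ne x \in Gamma (quotient_hom ne) (proj ne v).
Proof.
have [_ _ Q_cov _] := Q_adm.
have covered a : a \in Gamma xi v -> v \in cover Q -> a \in cover Q.
  by move=> /component_fibre; rewrite !Q_cov => ->.
move=> vQ; apply: component_map => [a va | a b va /and3P [_ /eqP vb ab]].
  apply: Some_inj; rewrite -!quotient_hom_proj ?(covered a) //.
  by rewrite (component_fibre va).
by apply: proj_adj ab; rewrite Q_cov ?vb -Q_cov // (covered a).
Qed.

(* ... and lift back: a block in the Gamma-class of the block of v lies in
   the Gamma-class of v.  Here injectivity of p is essential. *)
Lemma Gamma_lift ne v (B : block Q) :
  v \in cover Q -> B \in Gamma (quotient_hom ne) (proj ne v) -> val B \subset Gamma xi v.
Proof.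
have [_ _ _ Q_Gam] := Q_adm.
move=> vQ; rewrite inE; move: B.
apply: (connect_ind (P := fun B : block Q => val B \subset Gamma xi v)).
  exact: Q_Gam (valP _) (proj_mem ne vQ).
move=> C D _ /and3P [_ /eqP fD CD] /subsetP sC.
have [x [y [xC yD xy]]] : exists x y, [/\ x \in val C, y \in val D & adj x y].
  case/orP: CD => /block_arcP [x [y [xC yD a]]].
    by exists x, y; rewrite /adj a.
  by exists y, x; rewrite /adj a orbT.
have yv : hom_fun xi y = hom_fun xi v.
  apply: p_emb.1 (quotient_homE yD) _.
  by rewrite fD quotient_hom_proj.
have vy : y \in Gamma xi v.
  apply: component_step (sC _ xC) _.
  by rewrite /fibre_rel (component_fibre (sC _ xC)) yv eqxx.
by rewrite GammaE -(component_trans vy) -GammaE; apply: Q_Gam (valP D) yD.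
Qed.

Variables (D' : digraph -> Prop) (S : digraph) (rho : forall H, D' H -> hom H R -> hom H S).
Hypothesis Q_in : forall ne : 0 < #|{: block Q}|, D' (quotient ne).

(* The quotient exists only when Q is non-empty; otherwise no vertex is
   covered and the value of [lift] is irrelevant. *)
Definition lift : dV G -> dV S :=
  if sumbool_of_bool (0 < #|{: block Q}|) is left ne
  then fun x => hom_fun (rho (Q_in ne) (quotient_hom ne)) (proj ne x)
  else fun _ => some_vertex S.

Lemma liftE ne x : lift x = hom_fun (rho (Q_in ne) (quotient_hom ne)) (proj ne x).
Proof.
rewrite /lift; case: sumbool_of_bool => [ne' | ]; last by rewrite ne.
by rewrite (bool_irrelevance ne' ne).
Qed.

Lemma lift_arc x y :
  x \in cover Q -> y \in cover Q -> dA x y -> dA (lift x) (lift y).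
Proof.
move=> xQ yQ xy; rewrite !(liftE (cover_blocks xQ)).
by apply: hom_arc; apply: block_arcI xy; apply: proj_mem.
Qed.

Hypothesis rho_scheme : strong_Gamma_scheme rho.

Lemma lift_Gamma (X : eqType) (f : dV G -> X) v :
  v \in cover Q ->
  (forall x, f x = f v <-> x \in cover Q /\ lift x = lift v) ->
  component f v = Gamma xi v.
Proof.
have [_ _ Q_cov _] := Q_adm.
move=> vQ fibre; have ne := cover_blocks vQ.
set Z := rho (Q_in ne) (quotient_hom ne).
have liftZ x : lift x = hom_fun Z (proj ne x) by exact: liftE.
apply: component_eq => a va.
  have /(fibre a) [aQ fa] := component_fibre va.
  have : proj ne a \in component (hom_fun Z) (proj ne v).
    apply: component_map va => [b vb | b c vb /and3P [/eqP fb /eqP fc bc]].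
      by rewrite -!liftZ; case/fibre: (component_fibre vb).
    by apply: proj_adj bc; [case/fibre: fb | case/fibre: fc].
  rewrite -GammaE (rho_scheme _).2 => /(Gamma_lift vQ) /subsetP /(_ a (proj_mem ne aQ)).
  exact: component_fibre.
have aQ : a \in cover Q by rewrite Q_cov (component_fibre va) -Q_cov.
apply/fibre; split => //; rewrite !liftZ; apply: component_fibre.
by rewrite -GammaE (rho_scheme _).2; apply: Gamma_proj.
Qed.

End Transfer.

Lemma hom_eq (G H : digraph) (xi xi' : hom G H) :
  hom_fun xi =1 hom_fun xi' -> xi = xi'.
Proof. by move=> e; apply: val_inj; apply/ffunP. Qed.

(* The two proofs that the quotient
   lies in D' are identified by proof irrelevance. *)
Lemma lift_inj (D' : digraph -> Prop) (G T R S : digraph)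
    (rho : forall H, D' H -> hom H R -> hom H S) (p : dV T -> option (dV R))
    (xi xi' : hom G T) (Q Q' : {set {set dV G}}) (p_emb : partial_embedding p)
    (adm : admissible p xi Q) (adm' : admissible p xi' Q')
    (Q_in : forall ne : 0 < #|{: block Q}|, D' (quotient ne))
    (Q_in' : forall ne : 0 < #|{: block Q'}|, D' (quotient ne)) :
  strong_Gamma_scheme rho -> Q = Q' ->
  {in cover Q, lift p_emb adm rho Q_in =1 lift p_emb adm' rho Q_in'} ->
  {in cover Q, hom_fun xi =1 hom_fun xi'}.
Proof.
move=> rho_scheme eQ; subst Q'; move=> e x xQ; have ne := cover_blocks xQ.
have [Q_triv Q_set0 _ _] := adm.
have same_quotient_hom : quotient_hom p_emb adm ne = quotient_hom p_emb adm' ne.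
  apply: (rho_scheme _ (Q_in ne)).1; apply: hom_eq => B.
  have /set0Pn [y yB] : val B != set0 by apply: contraNneq Q_set0 => <-; apply: valP.
  have := e y (mem_cover yB); rewrite !(liftE _ _ _ _ ne) (proj_block ne Q_triv yB).
  by rewrite (proof_irrelevance _ (Q_in' ne) (Q_in ne)).
apply: p_emb.1 (quotient_hom_proj p_emb adm ne xQ) _.
by rewrite same_quotient_hom (quotient_hom_proj _ _ _ xQ).
Qed.

Definition left_part (R1 R2 : digraph) (a : dV (dsum R1 R2)) : option (dV R1) :=
  if a is inl r then Some r else None.

Definition right_part (R1 R2 : digraph) (a : dV (dsum R1 R2)) : option (dV R2) :=
  if a is inr r then Some r else None.

Lemma left_part_emb (R1 R2 : digraph) : partial_embedding (@left_part R1 R2).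
Proof. by split; [case=> a [] b r //= [->] [->] | case=> a [] b r s //= [<-] [<-]]. Qed.

Lemma right_part_emb (R1 R2 : digraph) : partial_embedding (@right_part R1 R2).
Proof. by split; [case=> a [] b r //= [->] [->] | case=> a [] b r s //= [<-] [<-]]. Qed.

Definition dom_preimage (G T R : digraph) (p : dV T -> option (dV R)) (xi : hom G T) :
  {set dV G} := [set v | p (hom_fun xi v) != None].

Definition blocks (G T : digraph) (by_classes : bool) (xi : hom G T) (A : {set dV G}) :
  {set {set dV G}} :=
  if by_classes then [set Gamma xi v | v in A] else [set [set v] | v in A].

Lemma blocks_admissible (G T R : digraph) (p : dV T -> option (dV R)) (xi : hom G T) b :
  admissible p xi (blocks b xi (dom_preimage p xi)).
Proof.
have Gamma_trans u x : x \in Gamma xi u -> Gamma xi x = Gamma xi u.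
  by rewrite !GammaE; apply: component_trans.
case: b; split; rewrite /blocks.
- apply/trivIsetP => _ _ /imsetP [u _ ->] /imsetP [w _ ->] uw.
  rewrite -setI_eq0; apply/negPn/negP => /set0Pn [x /setIP [ux wx]].
  by case/eqP: uw; rewrite -(Gamma_trans _ _ ux) -(Gamma_trans _ _ wx).
- by apply/imsetP => -[u _ u0]; move: (component_self (hom_fun xi) u); rewrite -GammaE -u0 inE.
- move=> x; rewrite /cover; apply/bigcupP/idP => [[_ /imsetP [u uA ->] ux] | xA].
    by move: uA; rewrite !inE (component_fibre ux).
  by exists (Gamma xi x); rewrite ?GammaE ?component_self // imset_f ?inE.
- by move=> _ x /imsetP [u _ ->] ux; rewrite (Gamma_trans _ _ ux).
- apply/trivIsetP => _ _ /imsetP [u _ ->] /imsetP [w _ ->] uw.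
  by rewrite disjoints1 inE; apply: contraNneq uw => ->.
- by apply/imsetP => -[u _ /setP /(_ u)]; rewrite !inE eqxx.
- move=> x; rewrite /cover; apply/bigcupP/idP => [[_ /imsetP [u uA ->]] | xA].
    by rewrite inE => /eqP ->; move: uA; rewrite inE.
  by exists [set x]; rewrite ?set11 // imset_f ?inE.
- move=> _ x /imsetP [u _ ->]; rewrite inE => /eqP ->.
  by rewrite sub1set GammaE component_self.
Qed.

Definition quotients_in (D' : digraph -> Prop) (b : bool) (R1 R2 : digraph) : Prop :=
  forall G (hG : D' G) (xi : hom G (dsum R1 R2)),
    (forall ne : 0 < #|{: block (blocks b xi (dom_preimage (@left_part R1 R2) xi))}|,
        D' (quotient ne)) /\
    (forall ne : 0 < #|{: block (blocks b xi (dom_preimage (@right_part R1 R2) xi))}|,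
        D' (quotient ne)).

Section DirectSum.
Variables (D' : digraph -> Prop) (R1 R2 S1 S2 : digraph) (b : bool).
Variables (rho1 : forall H, D' H -> hom H R1 -> hom H S1)
          (rho2 : forall H, D' H -> hom H R2 -> hom H S2).
Hypotheses (rho1_scheme : strong_Gamma_scheme rho1)
           (rho2_scheme : strong_Gamma_scheme rho2).
Hypothesis closed : quotients_in D' b R1 R2.

Section OneHomomorphism.
Variables (G : digraph) (hG : D' G) (xi : hom G (dsum R1 R2)).

Definition lift_left : dV G -> dV S1 :=
  lift (left_part_emb R1 R2) (blocks_admissible _ xi b) rho1 (closed hG xi).1.
Definition lift_right : dV G -> dV S2 :=
  lift (right_part_emb R1 R2) (blocks_admissible _ xi b) rho2 (closed hG xi).2.

Definition sum_map (v : dV G) : dV (dsum S1 S2) :=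
  if hom_fun xi v is inl _ then inl (lift_left v) else inr (lift_right v).

Lemma cover_left x :
  (x \in cover (blocks b xi (dom_preimage (@left_part R1 R2) xi))) =
  (left_part (hom_fun xi x) != None).
Proof. by have [] := blocks_admissible (@left_part R1 R2) xi b. Qed.

Lemma cover_right x :
  (x \in cover (blocks b xi (dom_preimage (@right_part R1 R2) xi))) =
  (right_part (hom_fun xi x) != None).
Proof. by have [] := blocks_admissible (@right_part R1 R2) xi b. Qed.

Lemma sum_map_is_hom : @is_hom G (dsum S1 S2) [ffun v => sum_map v].
Proof.
apply/forallP => v; apply/forallP => w; apply/implyP => vw.
move: (hom_arc xi vw); rewrite !ffunE /sum_map.
case ev: (hom_fun xi v) => [r|r]; case ew: (hom_fun xi w) => [s|s] //= _.
  by apply: lift_arc vw; rewrite cover_left ?ev ?ew.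
by apply: lift_arc vw; rewrite cover_right ?ev ?ew.
Qed.

Definition sum_hom : hom G (dsum S1 S2) :=
  exist (@is_hom G (dsum S1 S2)) _ sum_map_is_hom.

Lemma sum_homE v : hom_fun sum_hom v = sum_map v.
Proof. by rewrite /hom_fun /= ffunE. Qed.

Lemma sum_hom_Gamma v : Gamma sum_hom v = Gamma xi v.
Proof.
rewrite GammaE; case ev: (hom_fun xi v) => [r|r].
- apply: (lift_Gamma (p_emb := left_part_emb R1 R2) (Q_adm := blocks_admissible _ xi b)
            (Q_in := (closed hG xi).1) rho1_scheme); first by rewrite cover_left ev.
  move=> x; rewrite !sum_homE /sum_map /lift_left ev cover_left.
  case: (hom_fun xi x) => /= s; split; [by case=> -> | by case=> _ -> | by [] | by case].
- apply: (lift_Gamma (p_emb := right_part_emb R1 R2) (Q_adm := blocks_admissible _ xi b)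
            (Q_in := (closed hG xi).2) rho2_scheme); first by rewrite cover_right ev.
  move=> x; rewrite !sum_homE /sum_map /lift_right ev cover_right.
  case: (hom_fun xi x) => /= s; split; [by [] | by case | by case=> -> | by case=> _ ->].
Qed.

End OneHomomorphism.

Lemma sum_hom_inj G (hG : D' G) : injective (@sum_hom G hG).
Proof.
move=> xi xi' e.
have same x : sum_map hG xi x = sum_map hG xi' x by rewrite -!sum_homE e.
have sides x :
    ((left_part (hom_fun xi x) != None) = (left_part (hom_fun xi' x) != None)) /\
    ((right_part (hom_fun xi x) != None) = (right_part (hom_fun xi' x) != None)).
  by move: (same x); rewrite /sum_map; case: (hom_fun xi x); case: (hom_fun xi' x).
have Gamma_eq v : Gamma xi v = Gamma xi' v by rewrite -!(sum_hom_Gamma hG) e.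
have same_blocks (R : digraph) (p : dV (dsum R1 R2) -> option (dV R)) :
    (forall x, (p (hom_fun xi x) != None) = (p (hom_fun xi' x) != None)) ->
    blocks b xi (dom_preimage p xi) = blocks b xi' (dom_preimage p xi').
  move=> dom; have -> : dom_preimage p xi = dom_preimage p xi'.
    by apply/setP => x; rewrite !inE dom.
  by rewrite /blocks; case: b => //; apply: eq_imset Gamma_eq.
apply: hom_eq => x; case ex: (hom_fun xi x) => [r|r]; rewrite -ex.
- apply: (lift_inj (p_emb := left_part_emb R1 R2) (adm := blocks_admissible _ xi b)
           (adm' := blocks_admissible _ xi' b) (Q_in := (closed hG xi).1)
           (Q_in' := (closed hG xi').1) rho1_scheme (same_blocks _ _ (fun x => (sides x).1))).
    move=> y; rewrite cover_left; move: (same y); rewrite /sum_map /lift_left.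
    by case: (hom_fun xi y) => ?; case: (hom_fun xi' y) => ? //= [->].
  by rewrite cover_left ex.
- apply: (lift_inj (p_emb := right_part_emb R1 R2) (adm := blocks_admissible _ xi b)
           (adm' := blocks_admissible _ xi' b) (Q_in := (closed hG xi).2)
           (Q_in' := (closed hG xi').2) rho2_scheme (same_blocks _ _ (fun x => (sides x).2))).
    move=> y; rewrite cover_right; move: (same y); rewrite /sum_map /lift_right.
    by case: (hom_fun xi y) => ?; case: (hom_fun xi' y) => ? //= [->].
  by rewrite cover_right ex.
Qed.

End DirectSum.

Theorem Gamma_le_dsum (D' : digraph -> Prop) (R1 R2 S1 S2 : digraph) (b : bool) :
  quotients_in D' b R1 R2 -> Gamma_le D' R1 S1 -> Gamma_le D' R2 S2 ->
  Gamma_le D' (dsum R1 R2) (dsum S1 S2).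
Proof.
move=> closed [rho1 rho1_scheme] [rho2 rho2_scheme].
exists (fun G hG => sum_hom rho1 rho2 closed hG) => G hG /=; split.
  exact: (@sum_hom_inj _ _ _ _ _ _ _ _ rho1_scheme rho2_scheme closed).
by move=> xi v; apply: sum_hom_Gamma.
Qed.

(* T_a is closed under
   inverse images of homomorphisms that keep the ends of every non-loop arc
   apart: closed walks of H^* map to closed walks of R^*. *)
Lemma classTa_pullback (H R : digraph) (h : hom H R) :
  (forall c d, c != d -> dA c d -> hom_fun h c != hom_fun h d) ->
  classTa R -> classTa H.
Proof.
move=> apart hR [v0 [s [s_ne [walk closed_walk]]]]; apply: hR.
exists (hom_fun h v0), (map (hom_fun h) s); split; first by move: s_ne; case: (s).
split; last by rewrite last_map closed_walk.
by move: walk; apply: homo_path => c d /andP [cd a] /=; rewrite apart ?hom_arc.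
Qed.

(* In the quotient by Gamma-classes, distinct adjacent blocks have distinct
   images: otherwise an arc joins two vertices of one Gamma-class. *)
Lemma quotient_classes_apart (G T R : digraph) (p : dV T -> option (dV R))
    (xi : hom G T) (p_emb : partial_embedding p)
    (ne : 0 < #|{: block (blocks true xi (dom_preimage p xi))}|) :
  forall c d : dV (quotient ne), c != d -> dA c d ->
  hom_fun (quotient_hom p_emb (blocks_admissible p xi true) ne) c !=
  hom_fun (quotient_hom p_emb (blocks_admissible p xi true) ne) d.
Proof.
have class_of (B : dV (quotient ne)) z : z \in val B -> val B = Gamma xi z.
  move: (valP B) => /imsetP [u _ ->] uz.
  by rewrite !GammaE (component_trans uz).
move=> c d cd /block_arcP [x [y [xc yd xy]]]; apply: contra cd => /eqP same_image.
have xy_fibre : hom_fun xi x = hom_fun xi y.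
  apply: p_emb.1 (quotient_homE p_emb (blocks_admissible p xi true) xc) _.
  by rewrite same_image; apply: quotient_homE.
have y_in : y \in Gamma xi x.
  rewrite GammaE; apply: component_step (component_self _ _) _.
  by rewrite /fibre_rel xy_fibre !eqxx /adj xy.
apply/eqP/val_inj; rewrite (class_of _ _ xc) (class_of _ _ yd).
by rewrite !GammaE (component_trans y_in).
Qed.

Lemma quotients_in_Ta (D' : digraph -> Prop) (R1 R2 : digraph) :
  (forall G, classTa G -> D' G) -> classTa R1 -> classTa R2 ->
  quotients_in D' true R1 R2.
Proof.
move=> Ta_in R1_Ta R2_Ta G _ xi; split=> ne; apply: Ta_in.
  exact: classTa_pullback (quotient_classes_apart (ne := ne) (left_part_emb R1 R2)) R1_Ta.
exact: classTa_pullback (quotient_classes_apart (ne := ne) (right_part_emb R1 R2)) R2_Ta.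
Qed.

Lemma singleton_quotient_induced (G T : digraph) (xi : hom G T) (A : {set dV G})
    (ne : 0 < #|{: block (blocks false xi A)}|) :
  exists2 e : dV (quotient ne) -> dV G, injective e & forall c d, dA c d = dA (e c) (e d).
Proof.
pose e (c : dV (quotient ne)) := odflt (some_vertex G) [pick u in val c].
have single c : val c = [set e c].
  rewrite /e; move: (valP c) => /imsetP [u _ ->].
  by case: pickP => [w | /(_ u)]; rewrite !inE ?eqxx // => /eqP ->.
exists e; first by move=> c d cd; apply: val_inj; rewrite single cd -single.
move=> c d; apply/idP/idP => [/block_arcP [x [y []]] | cd].
  by rewrite (single c) (single d) !inE => /eqP -> /eqP ->.
by apply: block_arcI cd; rewrite ?single ?inE.
Qed.

Lemma is_poset_induced (H G : digraph) (e : dV H -> dV G) :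
  injective e -> (forall c d, dA c d = dA (e c) (e d)) -> is_poset G -> is_poset H.
Proof.
move=> e_inj eA [refl [antisym trans]]; split; [|split].
- by move=> c; rewrite eA.
- by move=> c d; rewrite !eA => /antisym /e_inj.
- by move=> d c f; rewrite !eA; apply: trans.
Qed.

Lemma classPstarP (G : digraph) :
  classPstar G <-> irreflexive (@dA G) /\ transitive (@dA G).
Proof.
split=> [[P [[refl [antisym trans]] [f [_ fA]]]] | [irr trans]].
  have irr (x : dV G) : dA x x = false by rewrite -fA /= eqxx.
  split=> // y x z; rewrite -!fA /= => /andP [xy Axy] /andP [yz Ayz].
  rewrite (trans _ _ _ Axy Ayz) andbT; apply: contraNneq xy => xz.
  by apply/eqP; apply: antisym; rewrite Axy xz.
exists (@Digraph (dV G) (fun x y => (x == y) || dA x y) (dV_nonempty G)); split.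
  split; [|split].
  - by move=> x /=; rewrite eqxx.
  - move=> x y /= /andP [/predU1P [//|xy] /predU1P [//|yx]].
    by move: (trans _ _ _ xy yx); rewrite irr.
  - move=> y x z /= /predU1P [-> //|xy] /predU1P [<-|yz]; first by rewrite xy orbT.
    by rewrite (trans _ _ _ xy yz) orbT.
exists id; split; first by exists id.
by move=> x y /=; case: eqVneq => [->|] /=; rewrite ?irr.
Qed.

Lemma classPstar_induced (H G : digraph) (e : dV H -> dV G) :
  (forall c d, dA c d = dA (e c) (e d)) -> classPstar G -> classPstar H.
Proof.
move=> eA /classPstarP [irr trans]; apply/classPstarP; split.
  by move=> c; rewrite eA irr.
by move=> d c f; rewrite !eA; apply: trans.
Qed.

Lemma quotients_in_induced (D' : digraph -> Prop) (R1 R2 : digraph) :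
  (forall (H G : digraph) (e : dV H -> dV G), injective e ->
     (forall c d, dA c d = dA (e c) (e d)) -> D' G -> D' H) ->
  quotients_in D' false R1 R2.
Proof.
move=> induced G hG xi; split=> ne; have [e e_inj eA] := singleton_quotient_induced ne;
  exact: induced e_inj eA hG.
Qed.

Unset Implicit Arguments.

Theorem corollary6 (D' : digraph -> Prop) (R1 R2 : digraph) :
  ((forall G, D' G <-> classD G)
   \/ ((forall G, classTa G -> D' G) /\ classTa R1 /\ classTa R2)
   \/ (((forall G, D' G <-> classP G) \/ (forall G, D' G <-> classPstar G))
       /\ D' R1 /\ D' R2)) ->
  forall S1 S2 : digraph,
    Gamma_le D' R1 S1 -> Gamma_le D' R2 S2 ->
    Gamma_le D' (dsum R1 R2) (dsum S1 S2).
Proof.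
move=> hyp S1 S2; case: hyp => [all_in | [[Ta_in [R1_Ta R2_Ta]] | [[is_P | is_Pstar] _]]].
- apply: (@Gamma_le_dsum _ _ _ _ _ true) => G _ xi.
  by split=> ne; apply/all_in.
- exact/Gamma_le_dsum/quotients_in_Ta.
- apply: (@Gamma_le_dsum _ _ _ _ _ false); apply: quotients_in_induced.
  by move=> H G e e_inj eA /is_P G_P; apply/is_P; apply: is_poset_induced e_inj eA G_P.
- apply: (@Gamma_le_dsum _ _ _ _ _ false); apply: quotients_in_induced.
  by move=> H G e _ eA /is_Pstar G_P; apply/is_Pstar; apply: classPstar_induced eA G_P.
Qed.
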